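(* Consider the single-armed lazy restless bandit described in the context with fixed subsidy $\eta$ and $p_{0,0}>p_{1,0}$, and let $b=\min\left\{1,\frac{R_1-R_0}{\rho_1-\rho_0}\right\}$. Then $\pi\mapsto V_S(\pi)-V_{NS}(\pi)$ is decreasing on $[0,1]$ under any of the following conditions: (1) $K$ is large, i.e. in the large-$K$ model where $\gamma_2(\pi)$ is replaced by the constant $q$; (2) for any $K>1$, when $0<p_{0,0}-p_{1,0}<b/5$ and $\beta\in(0,1)$; (3) for any $K>1$, when $\beta\in(0,b/5)$.
   Context: Single-armed lazy restless bandit: an arm has a hidden state in $\{0,1\}$ evolving as a two-state Markov chain with transition probabilities $p_{i,j}$ ($p_{i,0}+p_{i,1}=1$). During each session the chain makes exactly $K\ge1$ transitions. In each session the decision maker plays the arm or not. If played with the arm in state $i$ at session start, an ACK is received with probability $\rho_i\in[0,1]$ and the expected reward is $R_i$; if not played, subsidy $\eta$ is received and nothing observed. Discount $\beta\in(0,1)$. Standing assumptions: $\rho_0<\rho_1$, $R_0<R_1$. Belief $\pi\in[0,1]$ = probability of state $0$. $R_S(\pi)=\pi R_0+(1-\pi)R_1$, $\rho(\pi)=\pi\rho_0+(1-\pi)\rho_1$, $\gamma_1(\pi)=\frac{(1-\pi)\rho_1p_{1,0}+\pi\rho_0p_{0,0}}{\rho_1(1-\pi)+\rho_0\pi}$, $\gamma_0(\pi)=\frac{(1-\pi)(1-\rho_1)p_{1,0}+\pi(1-\rho_0)p_{0,0}}{(1-\rho_1)(1-\pi)+(1-\rho_0)\pi}$, $\gamma_2(\pi)=(p_{0,0}-p_{1,0})^K\pi+p_{1,0}\sum_{j=0}^{K-1}(p_{0,0}-p_{1,0})^j$.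 $V_S,V_{NS},V$ are the unique bounded solution of $V_S(\pi)=R_S(\pi)+\beta\big(\rho(\pi)V(\gamma_1(\pi))+(1-\rho(\pi))V(\gamma_0(\pi))\big)$, $V_{NS}(\pi)=\eta+\beta V(\gamma_2(\pi))$, $V(\pi)=\max\{V_S(\pi),V_{NS}(\pi)\}$ (a term with zero coefficient is taken to be $0$). Let $q=\frac{p_{1,0}}{1-(p_{0,0}-p_{1,0})}$; the ''large-$K$ model'' is the same dynamic program with $\gamma_2(\pi)$ replaced by the constant $q$ for all $\pi$. *)

From Stdlib Require Import Reals.
Open Scope R_scope.

(* Parameters:
   p00 = p_{0,0}, p10 = p_{1,0}  (p_{0,1} = 1 - p00, p_{1,1} = 1 - p10),
   rho0, rho1 (ACK probabilities), R0, R1 (expected rewards),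
   eta (subsidy), beta (discount).  Belief pi = P(state 0). *)

Definition RS (R0 R1 pi : R) : R := pi * R0 + (1 - pi) * R1.
Definition rho (rho0 rho1 pi : R) : R := pi * rho0 + (1 - pi) * rho1.

Definition gamma1 (p00 p10 rho0 rho1 pi : R) : R :=
  ((1 - pi) * rho1 * p10 + pi * rho0 * p00) / (rho1 * (1 - pi) + rho0 * pi).

Definition gamma0 (p00 p10 rho0 rho1 pi : R) : R :=
  ((1 - pi) * (1 - rho1) * p10 + pi * (1 - rho0) * p00)
  / ((1 - rho1) * (1 - pi) + (1 - rho0) * pi).

Fixpoint geom_sum (K : nat) (d : R) : R :=
  match K with
  | O => 0
  | S n => geom_sum n d + d ^ n
  end.

(* gamma_2 : belief after K unobserved transitions *)
Definition gamma2 (K : nat) (p00 p10 pi : R) : R :=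
  (p00 - p10) ^ K * pi + p10 * geom_sum K (p00 - p10).

(* stationary probability of state 0, used by the large-K model *)
Definition qstat (p00 p10 : R) : R := p10 / (1 - (p00 - p10)).

Definition bounded01 (f : R -> R) : Prop :=
  exists M, forall pi, 0 <= pi <= 1 -> Rabs (f pi) <= M.

(* A term with zero coefficient is 0: with Rocq's
   total division (x/0 = 0) the product  rho(pi) * V(gamma1 pi)  is 0 whenever
   rho(pi) = 0, and similarly for the other term. *)
Definition bellman_sol (p00 p10 rho0 rho1 R0 R1 eta beta : R) (g2 : R -> R)
    (VS VNS V : R -> R) : Prop :=
  bounded01 VS /\ bounded01 VNS /\ bounded01 V /\
  forall pi, 0 <= pi <= 1 ->
    VS pi = RS R0 R1 pi
            + beta * (rho rho0 rho1 pi * V (gamma1 p00 p10 rho0 rho1 pi)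
                      + (1 - rho rho0 rho1 pi) * V (gamma0 p00 p10 rho0 rho1 pi))
    /\ VNS pi = eta + beta * V (g2 pi)
    /\ V pi = Rmax (VS pi) (VNS pi).

(* "decreasing" on [0,1], read as non-increasing *)
Definition noninc01 (f : R -> R) : Prop :=
  forall x y, 0 <= x -> x <= y -> y <= 1 -> f y <= f x.

From Stdlib Require Import Reals Lra Lia Psatz.
Open Scope R_scope.

(* Two slope bounds on [0,1] are preserved by the Bellman operator: V is
   nonincreasing, and V x - V y <= A (y - x) with
   A = (R1 - R0) / (1 - 3 beta (p00 - p10)).  Starting from the trivial bound
   |V| <= M the error shrinks by beta per iteration, so both hold for the
   bounded solution.  Preservation of the second rests on the fact that after
   an ACK or a NACK the beliefs at x <= y stay ordered and, weighted by their
   probabilities, move apart by at most (p00 - p10)(y - x); the played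
   expectation splits into three such terms.  Then playing gains at least
   (R1 - R0)(y - x) over [x, y], while not playing loses at most
   beta A c (y - x), where c = (p00 - p10)^K is the slope of gamma2 (c = 0 in
   the large-K model).  So VS - VNS is nonincreasing once
   beta ((p00 - p10)^K + 3 (p00 - p10)) < 1, which holds in cases (2) and (3)
   because b <= 1. *)

(* With [W := fun t => - V t] and [A = 0] this says V is nonincreasing up to e. *)
Definition drop_bounded (W : R -> R) (A e : R) : Prop :=
  forall a b, 0 <= a -> a <= b -> b <= 1 -> W a - W b <= A * (b - a) + e.

Lemma Rmax_sub_le a b c d t : a - c <= t -> b - d <= t -> Rmax a b - Rmax c d <= t.
Proof.
  intros Hac Hbd.
  pose proof (Rmax_l c d); pose proof (Rmax_r c d).
  assert (Rmax a b <= Rmax c d + t) by (apply Rmax_lub; lra).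
  lra.
Qed.

Lemma le_0_of_le_geometric z C beta :
  0 <= C -> 0 < beta < 1 -> (forall n, z <= C * beta ^ n) -> z <= 0.
Proof.
  intros HC Hbeta Hz.
  apply Rnot_lt_le; intros Hpos.
  assert (Hb : Rabs beta < 1) by (rewrite Rabs_pos_eq; lra).
  assert (Heps : 0 < z / (C + 1)) by (apply Rdiv_lt_0_compat; lra).
  destruct (pow_lt_1_zero beta Hb _ Heps) as [N HN].
  specialize (HN N (le_n N)); specialize (Hz N).
  rewrite Rabs_pos_eq in HN by (apply pow_le; lra).
  assert (C * beta ^ N <= C * (z / (C + 1))) by (apply Rmult_le_compat_l; lra).
  assert (z / (C + 1) * (C + 1) = z) by (field; lra).
  nra.
Qed.

Lemma bounded01_opp V : bounded01 V -> bounded01 (fun t => - V t).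
Proof. intros [M HM]; exists M; intros pi Hpi; rewrite Rabs_Ropp; auto. Qed.

(* The slack 2M of the trivial bound becomes 2M beta^n after n steps. *)
Lemma drop_bounded_of_contraction W A beta :
  bounded01 W -> 0 <= A -> 0 < beta < 1 ->
  (forall e, 0 <= e -> drop_bounded W A e -> drop_bounded W A (beta * e)) ->
  drop_bounded W A 0.
Proof.
  intros [M HM] HA Hbeta Hstep.
  assert (HM0 : 0 <= M) by (pose proof (HM 0 ltac:(lra)); pose proof (Rabs_pos (W 0)); lra).
  assert (Hn : forall n, drop_bounded W A (2 * M * beta ^ n)).
  { induction n as [|n IH].
    - intros a b ha hab hb.
      pose proof (Rle_abs (W a)); pose proof (Rle_abs (- W b)); rewrite Rabs_Ropp in *.
      pose proof (HM a ltac:(lra)); pose proof (HM b ltac:(lra)).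
      assert (0 <= A * (b - a)) by (apply Rmult_le_pos; lra).
      simpl; lra.
    - replace (2 * M * beta ^ S n) with (beta * (2 * M * beta ^ n)) by (simpl; ring).
      apply Hstep; [|exact IH].
      apply Rmult_le_pos; [lra | apply pow_le; lra]. }
  intros a b ha hab hb.
  enough (W a - W b - A * (b - a) <= 0) by lra.
  apply (le_0_of_le_geometric _ (2 * M) beta); [lra | exact Hbeta |].
  intros n; pose proof (Hn n a b ha hab hb); lra.
Qed.

Lemma weighted_drop_le V A e w a b s :
  drop_bounded V A e -> 0 <= A -> 0 <= w -> 0 <= s -> 0 <= a <= 1 -> 0 <= b <= 1 ->
  (0 < w -> a <= b /\ w * (b - a) <= s) ->
  w * (V a - V b) <= A * s + w * e.
Proof.
  intros HV HA Hw Hs Ha Hb Hab.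
  destruct (Rle_lt_or_eq_dec 0 w Hw) as [Hw' | <-].
  - destruct (Hab Hw') as [Hle Hws].
    pose proof (HV a b (proj1 Ha) Hle (proj2 Hb)).
    assert (w * (V a - V b) <= w * (A * (b - a) + e)) by (apply Rmult_le_compat_l; lra).
    assert (A * (w * (b - a)) <= A * s) by (apply Rmult_le_compat_l; lra).
    lra.
  - assert (0 <= A * s) by (apply Rmult_le_pos; lra).
    lra.
Qed.

Section Bandit.

Variables p00 p10 rho0 rho1 : R.
Hypotheses (Hp00 : 0 <= p00 <= 1) (Hp10 : 0 <= p10 <= 1)
  (Hrho0 : 0 <= rho0 <= 1) (Hrho1 : 0 <= rho1 <= 1) (Hrho : rho0 < rho1)
  (Hp : p10 <= p00).

Local Notation rh := (rho rho0 rho1).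
Local Notation g1 := (gamma1 p00 p10 rho0 rho1).
Local Notation g0 := (gamma0 p00 p10 rho0 rho1).

Lemma rho_between pi : 0 <= pi <= 1 -> rho0 <= rh pi <= rho1.
Proof. intros; unfold rho; nra. Qed.

Lemma rho_sub x y : rh x - rh y = (rho1 - rho0) * (y - x).
Proof. unfold rho; ring. Qed.

Lemma gamma1_between pi : 0 <= pi <= 1 -> 0 < rh pi ->
  p10 <= g1 pi <= p10 + (p00 - p10) * pi.
Proof.
  intros Hpi Hr; pose proof (rho_between pi Hpi).
  assert (E : rh pi * (g1 pi - p10) = (p00 - p10) * rho0 * pi)
    by (unfold gamma1; unfold rho in *; field; lra).
  assert (0 <= (p00 - p10) * pi) by (apply Rmult_le_pos; lra).
  split; nra.
Qed.

Lemma gamma0_between pi : 0 <= pi <= 1 -> 0 < 1 - rh pi ->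
  p10 + (p00 - p10) * pi <= g0 pi <= p00.
Proof.
  intros Hpi Hr; pose proof (rho_between pi Hpi).
  assert (E : (1 - rh pi) * (g0 pi - p10) = (p00 - p10) * (1 - rho0) * pi)
    by (unfold gamma0; unfold rho in *; field; lra).
  assert (Hlo : (1 - rh pi) * (g0 pi - p10 - (p00 - p10) * pi) = (p00 - p10) * pi * (rh pi - rho0)).
  { transitivity ((1 - rh pi) * (g0 pi - p10) - (1 - rh pi) * (p00 - p10) * pi); [ring|].
    rewrite E; ring. }
  assert (Hhi : (1 - rh pi) * (p00 - g0 pi) = (p00 - p10) * (1 - pi) * (1 - rho1)).
  { transitivity ((1 - rh pi) * (p00 - p10) - (1 - rh pi) * (g0 pi - p10)); [ring|].
    rewrite E; unfold rho; ring. }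
  assert (0 <= (p00 - p10) * pi * (rh pi - rho0)) by (apply Rmult_le_pos; [apply Rmult_le_pos|]; lra).
  assert (0 <= (p00 - p10) * (1 - pi) * (1 - rho1)) by (apply Rmult_le_pos; [apply Rmult_le_pos|]; lra).
  split; nra.
Qed.

Lemma gamma1_range pi : 0 <= pi <= 1 -> 0 <= g1 pi <= 1.
Proof.
  intros Hpi; pose proof (rho_between pi Hpi).
  destruct (Rle_lt_or_eq_dec 0 (rh pi)) as [Hr | Hr]; [lra | |].
  - pose proof (gamma1_between pi Hpi Hr); nra.
  - (* a zero denominator gives [gamma1 pi = 0] since [x / 0 = 0] *)
    unfold gamma1; replace (rho1 * (1 - pi) + rho0 * pi) with (rh pi) by (unfold rho; ring).
    rewrite <- Hr, Rdiv_0_r; lra.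
Qed.

Lemma gamma0_range pi : 0 <= pi <= 1 -> 0 <= g0 pi <= 1.
Proof.
  intros Hpi; pose proof (rho_between pi Hpi).
  destruct (Rle_lt_or_eq_dec 0 (1 - rh pi)) as [Hr | Hr]; [lra | |].
  - pose proof (gamma0_between pi Hpi Hr); nra.
  - unfold gamma0; replace ((1 - rho1) * (1 - pi) + (1 - rho0) * pi) with (1 - rh pi)
      by (unfold rho; ring).
    rewrite <- Hr, Rdiv_0_r; lra.
Qed.

Lemma gamma1_step x y : 0 <= x -> x <= y -> y <= 1 -> 0 < rh y ->
  g1 x <= g1 y /\ rh y * (g1 y - g1 x) <= (p00 - p10) * (y - x).
Proof.
  intros hx hxy hy Hy.
  pose proof (rho_between x ltac:(lra)); pose proof (rho_between y ltac:(lra)).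
  pose proof (rho_sub x y).
  assert (Hx : 0 < rh x) by nra.
  assert (E : rh x * (rh y * (g1 y - g1 x)) = (p00 - p10) * rho1 * (y - x) * rho0)
    by (unfold gamma1; unfold rho in *; field; lra).
  assert (0 <= (p00 - p10) * (y - x)) by (apply Rmult_le_pos; lra).
  assert (0 <= (p00 - p10) * rho1 * (y - x)) by nra.
  assert (Hpos : 0 <= rh y * (g1 y - g1 x)) by nra.
  assert (rh y * (g1 y - g1 x) <= (p00 - p10) * rho1 * (y - x)) by nra.
  split; [|nra].
  apply Rmult_le_reg_l with (rh y); nra.
Qed.

Lemma gamma0_step x y : 0 <= x -> x <= y -> y <= 1 -> 0 < 1 - rh x ->
  g0 x <= g0 y /\ (1 - rh x) * (g0 y - g0 x) <= (p00 - p10) * (y - x).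
Proof.
  intros hx hxy hy Hx.
  pose proof (rho_between x ltac:(lra)); pose proof (rho_between y ltac:(lra)).
  pose proof (rho_sub x y).
  assert (Hy : 0 < 1 - rh y) by nra.
  assert (E : (1 - rh y) * ((1 - rh x) * (g0 y - g0 x))
              = (p00 - p10) * (1 - rho0) * (y - x) * (1 - rho1))
    by (unfold gamma0; unfold rho in *; field; lra).
  assert (0 <= (p00 - p10) * (y - x)) by (apply Rmult_le_pos; lra).
  assert (0 <= (p00 - p10) * (1 - rho0) * (y - x)) by nra.
  assert (Hpos : 0 <= (1 - rh x) * (g0 y - g0 x)) by nra.
  assert ((1 - rh x) * (g0 y - g0 x) <= (p00 - p10) * (1 - rho0) * (y - x)) by nra.
  split; [|nra].
  apply Rmult_le_reg_l with (1 - rh x); nra.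
Qed.

Lemma gamma1_le_gamma0 x y : 0 <= x -> x <= y -> y <= 1 -> 0 < rh x - rh y ->
  g1 x <= g0 y /\ (rh x - rh y) * (g0 y - g1 x) <= (p00 - p10) * (y - x).
Proof.
  intros hx hxy hy Hxy.
  pose proof (rho_between x ltac:(lra)); pose proof (rho_between y ltac:(lra)).
  pose proof (rho_sub x y).
  pose proof (gamma1_between x ltac:(lra) ltac:(lra)).
  pose proof (gamma0_between y ltac:(lra) ltac:(lra)).
  assert ((p00 - p10) * x <= (p00 - p10) * y) by (apply Rmult_le_compat_l; lra).
  assert (Hd : 0 <= g0 y - g1 x <= p00 - p10) by lra.
  assert ((rh x - rh y) * (g0 y - g1 x) <= (rh x - rh y) * (p00 - p10))
    by (apply Rmult_le_compat_l; lra).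
  assert ((rho1 - rho0) * (y - x) * (p00 - p10) <= (y - x) * (p00 - p10))
    by (apply Rmult_le_compat_r; nra).
  split; nra.
Qed.

Definition play_mean (V : R -> R) (pi : R) : R :=
  rh pi * V (g1 pi) + (1 - rh pi) * V (g0 pi).

Lemma play_mean_drop V A e : drop_bounded V A e -> 0 <= A ->
  drop_bounded (play_mean V) (3 * A * (p00 - p10)) e.
Proof.
  intros HV HA x y hx hxy hy.
  pose proof (rho_between x ltac:(lra)); pose proof (rho_between y ltac:(lra)).
  pose proof (rho_sub x y).
  assert (Hs : 0 <= (p00 - p10) * (y - x)) by (apply Rmult_le_pos; lra).
  (* each weight is paired with a belief difference controlled by one of the
     three gamma lemmas *)
  assert (Hsplit : play_mean V x - play_mean V y =
     rh y * (V (g1 x) - V (g1 y)) + (1 - rh x) * (V (g0 x) - V (g0 y))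
     + (rh x - rh y) * (V (g1 x) - V (g0 y))) by (unfold play_mean; ring).
  assert (T1 : rh y * (V (g1 x) - V (g1 y)) <= A * ((p00 - p10) * (y - x)) + rh y * e).
  { apply weighted_drop_le; auto; try apply gamma1_range; try lra.
    intros; apply gamma1_step; auto. }
  assert (T0 : (1 - rh x) * (V (g0 x) - V (g0 y)) <= A * ((p00 - p10) * (y - x)) + (1 - rh x) * e).
  { apply weighted_drop_le; auto; try apply gamma0_range; try lra.
    intros; apply gamma0_step; auto. }
  assert (T10 : (rh x - rh y) * (V (g1 x) - V (g0 y))
                <= A * ((p00 - p10) * (y - x)) + (rh x - rh y) * e).
  { apply weighted_drop_le; auto; try apply gamma1_range; try apply gamma0_range; try nra.
    intros; apply gamma1_le_gamma0; auto. }
  rewrite Hsplit; lra.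
Qed.

Lemma play_mean_rise V e : drop_bounded (fun t => - V t) 0 e ->
  drop_bounded (fun t => - play_mean V t) 0 e.
Proof.
  intros HV x y hx hxy hy.
  pose proof (play_mean_drop _ _ _ HV (Rle_refl 0) x y hx hxy hy) as H.
  unfold play_mean in *; lra.
Qed.

Section Bellman.

Variables (R0 R1 eta beta : R) (g2 VS VNS V : R -> R).
Hypotheses (HR : R0 < R1) (Hbeta : 0 < beta < 1)
  (Hg2 : forall x y, 0 <= x -> x <= y -> y <= 1 -> 0 <= g2 x /\ g2 x <= g2 y /\ g2 y <= 1)
  (Hsol : bellman_sol p00 p10 rho0 rho1 R0 R1 eta beta g2 VS VNS V).

Lemma bellman_eq pi : 0 <= pi <= 1 ->
  VS pi = RS R0 R1 pi + beta * play_mean V pi /\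
  VNS pi = eta + beta * V (g2 pi) /\
  V pi = Rmax (VS pi) (VNS pi).
Proof. destruct Hsol as (_ & _ & _ & H); exact (H pi). Qed.

Lemma RS_sub x y : RS R0 R1 x - RS R0 R1 y = (R1 - R0) * (y - x).
Proof. unfold RS; ring. Qed.

Lemma V_antitone : noninc01 V.
Proof.
  assert (H : drop_bounded (fun t => - V t) 0 0).
  { destruct Hsol as (_ & _ & HVb & _).
    apply (drop_bounded_of_contraction _ _ beta (bounded01_opp _ HVb) (Rle_refl 0) Hbeta).
    intros e He HW a b ha hab hb.
    destruct (bellman_eq a ltac:(lra)) as (ESa & ENa & EVa).
    destruct (bellman_eq b ltac:(lra)) as (ESb & ENb & EVb).
    pose proof (play_mean_rise _ _ HW a b ha hab hb) as HE.
    destruct (Hg2 a b ha hab hb) as (? & ? & ?).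
    pose proof (HW (g2 a) (g2 b) ltac:(lra) ltac:(lra) ltac:(lra)) as HN.
    pose proof (RS_sub a b).
    assert (0 <= (R1 - R0) * (b - a)) by (apply Rmult_le_pos; lra).
    enough (V b - V a <= beta * e) by lra.
    rewrite EVa, EVb; apply Rmax_sub_le; [rewrite ESa, ESb | rewrite ENa, ENb]; nra. }
  intros x y hx hxy hy; pose proof (H x y hx hxy hy); lra.
Qed.

Lemma gap_rise x y : 0 <= x -> x <= y -> y <= 1 ->
  (VS y - VNS y) - (VS x - VNS x) <= beta * (V (g2 x) - V (g2 y)) - (R1 - R0) * (y - x).
Proof.
  intros hx hxy hy.
  assert (HW : drop_bounded (fun t => - V t) 0 0)
    by (intros a b ha hab hb; pose proof (V_antitone a b ha hab hb); lra).
  pose proof (play_mean_rise _ _ HW x y hx hxy hy) as HE.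
  destruct (bellman_eq x ltac:(lra)) as (ESx & ENx & _).
  destruct (bellman_eq y ltac:(lra)) as (ESy & ENy & _).
  pose proof (RS_sub x y).
  rewrite ESx, ESy, ENx, ENy; nra.
Qed.

Lemma V_drop_lipschitz c : 0 <= c ->
  (forall x y, 0 <= x -> x <= y -> y <= 1 -> g2 y - g2 x <= c * (y - x)) ->
  beta * c <= 1 -> 3 * beta * (p00 - p10) < 1 ->
  drop_bounded V ((R1 - R0) / (1 - 3 * beta * (p00 - p10))) 0.
Proof.
  intros Hc0 Hc Hbc Hd.
  (* A is the fixed point of A = (R1 - R0) + 3 beta (p00 - p10) A *)
  set (A := (R1 - R0) / (1 - 3 * beta * (p00 - p10))).
  assert (HA : A * (1 - 3 * beta * (p00 - p10)) = R1 - R0) by (unfold A; field; lra).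
  assert (HA0 : 0 <= A) by (unfold A; apply Rle_mult_inv_pos; lra).
  destruct Hsol as (_ & _ & HVb & _).
  apply (drop_bounded_of_contraction _ _ beta HVb HA0 Hbeta).
  intros e He HW a b ha hab hb.
  destruct (bellman_eq a ltac:(lra)) as (ESa & ENa & EVa).
  destruct (bellman_eq b ltac:(lra)) as (ESb & ENb & EVb).
  pose proof (play_mean_drop _ _ _ HW HA0 a b ha hab hb) as HE.
  destruct (Hg2 a b ha hab hb) as (? & ? & ?).
  pose proof (HW (g2 a) (g2 b) ltac:(lra) ltac:(lra) ltac:(lra)) as HN.
  pose proof (Hc a b ha hab hb).
  pose proof (RS_sub a b).
  assert (A * (g2 b - g2 a) <= A * (c * (b - a))) by (apply Rmult_le_compat_l; lra).
  assert ((beta * c) * (A * (b - a)) <= A * (b - a))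
    by (pose proof (Rmult_le_pos A (b - a) HA0 ltac:(lra)); nra).
  rewrite EVa, EVb; apply Rmax_sub_le; [rewrite ESa, ESb | rewrite ENa, ENb]; nra.
Qed.

End Bellman.

Lemma gap_antitone_const R0 R1 eta beta q VS VNS V :
  R0 < R1 -> 0 < beta < 1 -> 0 <= q <= 1 ->
  bellman_sol p00 p10 rho0 rho1 R0 R1 eta beta (fun _ => q) VS VNS V ->
  noninc01 (fun pi => VS pi - VNS pi).
Proof.
  intros HR Hbeta Hq Hsol x y hx hxy hy.
  assert (Hg2 : forall x y, 0 <= x -> x <= y -> y <= 1 -> 0 <= q /\ q <= q /\ q <= 1)
    by (intros; lra).
  pose proof (gap_rise _ _ _ _ _ _ _ _ HR Hbeta Hg2 Hsol x y hx hxy hy).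
  assert (0 <= (R1 - R0) * (y - x)) by (apply Rmult_le_pos; lra).
  simpl; lra.
Qed.

Lemma gap_antitone_lipschitz R0 R1 eta beta g2 VS VNS V c :
  R0 < R1 -> 0 < beta < 1 ->
  (forall x y, 0 <= x -> x <= y -> y <= 1 -> 0 <= g2 x /\ g2 x <= g2 y /\ g2 y <= 1) ->
  0 <= c -> (forall x y, 0 <= x -> x <= y -> y <= 1 -> g2 y - g2 x <= c * (y - x)) ->
  beta * (c + 3 * (p00 - p10)) < 1 ->
  bellman_sol p00 p10 rho0 rho1 R0 R1 eta beta g2 VS VNS V ->
  noninc01 (fun pi => VS pi - VNS pi).
Proof.
  intros HR Hbeta Hg2 Hc0 Hc Hbc Hsol x y hx hxy hy.
  assert (Hd : 3 * beta * (p00 - p10) < 1) by nra.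
  pose proof (V_drop_lipschitz _ _ _ _ _ _ _ _ HR Hbeta Hg2 Hsol c Hc0 Hc ltac:(nra) Hd) as HV.
  set (A := (R1 - R0) / (1 - 3 * beta * (p00 - p10))) in HV.
  assert (HA : A * (1 - 3 * beta * (p00 - p10)) = R1 - R0) by (unfold A; field; lra).
  assert (HA0 : 0 <= A) by (unfold A; apply Rle_mult_inv_pos; lra).
  pose proof (gap_rise _ _ _ _ _ _ _ _ HR Hbeta Hg2 Hsol x y hx hxy hy).
  destruct (Hg2 x y hx hxy hy) as (? & ? & ?).
  pose proof (HV (g2 x) (g2 y) ltac:(lra) ltac:(lra) ltac:(lra)).
  pose proof (Hc x y hx hxy hy).
  assert (A * (g2 y - g2 x) <= A * (c * (y - x))) by (apply Rmult_le_compat_l; lra).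
  assert ((beta * c) * (A * (y - x)) <= (1 - 3 * beta * (p00 - p10)) * (A * (y - x)))
    by (pose proof (Rmult_le_pos A (y - x) HA0 ltac:(lra)); nra).
  simpl; nra.
Qed.

Lemma geom_sum_succ K d : geom_sum (S K) d = d * geom_sum K d + 1.
Proof. induction K as [|K IH]; cbn [geom_sum pow] in *; [ring | lra]. Qed.

Lemma gamma2_succ K pi :
  gamma2 (S K) p00 p10 pi = (p00 - p10) * gamma2 K p00 p10 pi + p10.
Proof. unfold gamma2; rewrite geom_sum_succ; cbn [pow]; ring. Qed.

Lemma gamma2_range K pi : 0 <= pi <= 1 -> 0 <= gamma2 K p00 p10 pi <= 1.
Proof.
  intros Hpi; induction K as [|K IH].
  - unfold gamma2; simpl; lra.
  - rewrite gamma2_succ.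
    assert (0 <= (p00 - p10) * gamma2 K p00 p10 pi) by (apply Rmult_le_pos; lra).
    assert ((p00 - p10) * gamma2 K p00 p10 pi <= p00 - p10) by nra.
    lra.
Qed.

Lemma gamma2_sub K x y :
  gamma2 K p00 p10 y - gamma2 K p00 p10 x = (p00 - p10) ^ K * (y - x).
Proof. unfold gamma2; ring. Qed.

Lemma gap_antitone_gamma2 R0 R1 eta beta K VS VNS V :
  R0 < R1 -> 0 < beta < 1 -> beta * ((p00 - p10) ^ K + 3 * (p00 - p10)) < 1 ->
  bellman_sol p00 p10 rho0 rho1 R0 R1 eta beta (gamma2 K p00 p10) VS VNS V ->
  noninc01 (fun pi => VS pi - VNS pi).
Proof.
  intros HR Hbeta HK Hsol.
  assert (Hc0 : 0 <= (p00 - p10) ^ K) by (apply pow_le; lra).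
  apply (gap_antitone_lipschitz R0 R1 eta beta (gamma2 K p00 p10) VS VNS V
           ((p00 - p10) ^ K) HR Hbeta); auto.
  - intros x y hx hxy hy.
    pose proof (gamma2_range K x ltac:(lra)); pose proof (gamma2_range K y ltac:(lra)).
    pose proof (gamma2_sub K x y).
    assert (0 <= (p00 - p10) ^ K * (y - x)) by (apply Rmult_le_pos; lra).
    lra.
  - intros x y _ _ _; rewrite gamma2_sub; lra.
Qed.

End Bandit.

Lemma qstat_range p00 p10 : 0 <= p10 <= p00 -> p00 <= 1 -> 0 <= qstat p00 p10 <= 1.
Proof.
  intros Hp10 Hp00; unfold qstat.
  destruct (Rle_lt_or_eq_dec (p00 - p10) 1) as [Hlt | Heq]; [lra | |].
  - split; [apply Rle_mult_inv_pos; lra|].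
    apply Rmult_le_reg_r with (1 - (p00 - p10)); [lra|].
    unfold Rdiv; rewrite Rmult_assoc, Rinv_l by lra; lra.
  - replace p10 with 0 by lra; unfold Rdiv; rewrite Rmult_0_l; lra.
Qed.

Lemma pow_le_1 d K : 0 <= d <= 1 -> d ^ K <= 1.
Proof. intros Hd; rewrite <- (pow1 K); apply pow_incr; lra. Qed.

Lemma pow_le_self d K : 0 <= d <= 1 -> (1 <= K)%nat -> d ^ K <= d.
Proof.
  intros Hd HK; destruct K as [|K]; [lia|].
  simpl; pose proof (pow_le_1 d K Hd); nra.
Qed.

Theorem lemma4 (p00 p10 rho0 rho1 R0 R1 eta beta : R)
  (Hp00 : 0 <= p00 <= 1) (Hp10 : 0 <= p10 <= 1)
  (Hrho0 : 0 <= rho0 <= 1) (Hrho1 : 0 <= rho1 <= 1)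
  (Hrho : rho0 < rho1) (HR : R0 < R1) (Hbeta : 0 < beta < 1)
  (Hp : p00 > p10) :
  let b := Rmin 1 ((R1 - R0) / (rho1 - rho0)) in
  (* (1) large-K model: gamma2 replaced by the constant q *)
  (forall VS VNS V : R -> R,
     bellman_sol p00 p10 rho0 rho1 R0 R1 eta beta (fun _ => qstat p00 p10) VS VNS V ->
     noninc01 (fun pi => VS pi - VNS pi))
  /\
  (* (2) any K > 1, with 0 < p00 - p10 < b/5 *)
  (forall (K : nat), (1 < K)%nat -> 0 < p00 - p10 < b / 5 ->
   forall VS VNS V : R -> R,
     bellman_sol p00 p10 rho0 rho1 R0 R1 eta beta (gamma2 K p00 p10) VS VNS V ->
     noninc01 (fun pi => VS pi - VNS pi))
  /\
  (* (3) any K > 1, with beta < b/5 *)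
  (forall (K : nat), (1 < K)%nat -> beta < b / 5 ->
   forall VS VNS V : R -> R,
     bellman_sol p00 p10 rho0 rho1 R0 R1 eta beta (gamma2 K p00 p10) VS VNS V ->
     noninc01 (fun pi => VS pi - VNS pi)).
Proof.
  intros b.
  assert (Hb1 : b <= 1) by apply Rmin_l.
  assert (Hd : 0 <= p00 - p10 <= 1) by lra.
  split; [|split].
  - intros VS VNS V.
    apply gap_antitone_const; try lra.
    apply qstat_range; lra.
  - intros K HK Hsmall VS VNS V.
    apply gap_antitone_gamma2; try lra.
    pose proof (pow_le_self _ K Hd ltac:(lia)); nra.
  - intros K HK Hsmall VS VNS V.
    apply gap_antitone_gamma2; try lra.
    pose proof (pow_le_1 _ K Hd); nra.
Qed.
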